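(* For every integer $n\ge1$, the set $S_2^{(n)}=\{k\in\mathbb{R}\setminus B_n : E_{(a^{(n)}_{k,2},\,b^{(n)}_{k,2})} \text{ is defined over } \mathbb{Q}\}$ is countable.
   Context: Define $f_m,g_m\in\mathbb{Z}[T]$ by $f_0=0,f_1=1,g_0=2,g_1=T$, $f_m=Tf_{m-1}+f_{m-2}$, $g_m=Tg_{m-1}+g_{m-2}$, and set $F_n=f_{n+1}-f_n$, $G_n=g_{n+1}-g_n$. Let $B_n=\{k\in\mathbb{R}: F_n(k)-1=0 \text{ or } G_n(k)-k+2=0\}$. For $k\notin B_n$, the singular $k$-FL pair of level $n$ of Type 2 is $a^{(n)}_{k,2}=-\frac{27(F_n(k)-1)^2}{4(G_n(k)-k+2)^2}$, $b^{(n)}_{k,2}=\frac{27(F_n(k)-1)^3}{4(G_n(k)-k+2)^3}$. For real $a,b$, $E_{(a,b)}$ is the plane curve $y^2=x^3+ax+b$; it is defined over $\mathbb{Q}$ exactly when $a,b\in\mathbb{Q}$. *)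

From HB Require Import structures.
From mathcomp Require Import all_boot all_order all_algebra.
From mathcomp Require Import classical_sets cardinality reals.
Set Implicit Arguments. Unset Strict Implicit. Unset Printing Implicit Defensive.
Import Order.TTheory GRing.Theory Num.Theory.
Local Open Scope ring_scope.

(* fpair m = (f_m, f_{m+1}),  f_0 = 0, f_1 = 1, f_m = T f_{m-1} + f_{m-2} *)
Fixpoint fpair (m : nat) : {poly int} * {poly int} :=
  match m with
  | O => (0, 1)
  | S m' => let: (a, b) := fpair m' in (b, 'X * b + a)
  end.
(* gpair m = (g_m, g_{m+1}),  g_0 = 2, g_1 = T *)
Fixpoint gpair (m : nat) : {poly int} * {poly int} :=
  match m with
  | O => (2%:P, 'X)
  | S m' => let: (a, b) := gpair m' in (b, 'X * b + a)
  end.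

Definition fpoly (m : nat) : {poly int} := (fpair m).1.
Definition gpoly (m : nat) : {poly int} := (gpair m).1.

Definition Fpoly (n : nat) : {poly int} := fpoly n.+1 - fpoly n.
Definition Gpoly (n : nat) : {poly int} := gpoly n.+1 - gpoly n.

Definition evalZ (R : realType) (p : {poly int}) (x : R) : R :=
  (map_poly (fun z : int => z%:~R) p).[x].

Definition Fn (R : realType) (n : nat) (k : R) : R := evalZ (Fpoly n) k.
Definition Gn (R : realType) (n : nat) (k : R) : R := evalZ (Gpoly n) k.

Definition Bset (R : realType) (n : nat) : set R :=
  [set k | Fn n k - 1 = 0 \/ Gn n k - k + 2 = 0].

Definition a2 (R : realType) (n : nat) (k : R) : R :=
  - (27 * (Fn n k - 1) ^+ 2) / (4 * (Gn n k - k + 2) ^+ 2).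
Definition b2 (R : realType) (n : nat) (k : R) : R :=
  (27 * (Fn n k - 1) ^+ 3) / (4 * (Gn n k - k + 2) ^+ 3).

Definition is_rat (R : realType) (x : R) : Prop := exists q : rat, x = ratr q.

(* E_(a,b) is defined over Q iff a, b are rational *)
Definition defined_over_Q (R : realType) (a b : R) : Prop := is_rat a /\ is_rat b.

Definition S2 (R : realType) (n : nat) : set R :=
  [set k | ~ Bset n k /\ defined_over_Q (a2 n k) (b2 n k)].

(* If a and b are rational, so is t = -b/a = (F_n(k) - 1)/(G_n(k) - k + 2), hence k is a
   root of (F_n - 1) - t (G_n - T + 2).  This polynomial is nonzero because deg F_n <= n
   while G_n is monic of degree n + 1, and the term -T does not interfere with the leading
   coefficient once n >= 1.  So S_2 lies in the union, over the countably many rationals t,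
   of finite sets of roots. *)
From mathcomp Require Import all_boot all_order all_algebra.
From mathcomp Require Import classical_sets cardinality reals polyrcf ring.
Set Implicit Arguments.
Unset Strict Implicit.
Unset Printing Implicit Defensive.

Import Order.TTheory GRing.Theory Num.Theory.
Local Open Scope ring_scope.

Lemma fpolyS2 m : fpoly m.+2 = 'X * fpoly m.+1 + fpoly m.
Proof. by rewrite /fpoly /=; case: (fpair m). Qed.

Lemma gpolyS2 m : gpoly m.+2 = 'X * gpoly m.+1 + gpoly m.
Proof. by rewrite /gpoly /=; case: (gpair m). Qed.

Lemma size_XM_leq (R : nzSemiRingType) (p : {poly R}) :
  (size ('X * p)%R <= (size p).+1)%N.
Proof.
have [->|p0] := eqVneq p 0; first by rewrite mulr0 size_poly0.
by rewrite -(commr_polyX p) size_mulX.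
Qed.

Lemma size_fpoly m : (size (fpoly m) <= m)%N.
Proof.
suff /andP[] : (size (fpoly m) <= m)%N && (size (fpoly m.+1) <= m.+1)%N by [].
elim: m => [|m /andP[IHm IHm1]]; first by rewrite /fpoly /= size_poly0 size_poly1.
rewrite IHm1 fpolyS2 /=; apply: leq_trans (size_polyD _ _) _.
rewrite geq_max (leq_trans (size_XM_leq _)) ?ltnS //.
by rewrite (leq_trans IHm) // leqW.
Qed.

Lemma size_gpoly m : (size (gpoly m) <= m.+1)%N /\ size (gpoly m.+1) = m.+2.
Proof.
elim: m => [|m [IHm IHm1]]; first by rewrite /gpoly /= size_polyC size_polyX.
split; first by rewrite IHm1.
have g0 : gpoly m.+1 != 0 by rewrite -size_poly_eq0 IHm1.
have size_Xg : size ('X * gpoly m.+1) = m.+3.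
  by rewrite -(commr_polyX (gpoly m.+1)) size_mulX // IHm1.
by rewrite gpolyS2 size_polyDl size_Xg // ltnS ltnW.
Qed.

Lemma size_Fpoly n : (size (Fpoly n) <= n.+1)%N.
Proof.
rewrite /Fpoly (leq_trans (size_polyD _ _)) // size_polyN geq_max size_fpoly.
exact: leq_trans (size_fpoly n) _.
Qed.

Lemma size_Gpoly n : size (Gpoly n) = n.+2.
Proof.
have [le_g size_g1] := size_gpoly n.
by rewrite /Gpoly size_polyDl size_g1 // size_polyN ltnS.
Qed.

Lemma subr_scale_neq0 (R : idomainType) (p q : {poly R}) (t : R) :
  (size p < size q)%N -> t != 0 -> p - t *: q != 0.
Proof.
move=> lt_pq t0; rewrite -size_poly_eq0 addrC size_polyDl size_polyN size_scale // -lt0n.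
exact: leq_ltn_trans (leq0n _) lt_pq.
Qed.

Lemma countable_roots (R : rcfType) (I : countType) (P : I -> {poly R}) :
  countable [set x | exists2 i, P i != 0 & root (P i) x].
Proof.
apply: (@sub_countable _ _ _ (\bigcup_(i in [set i | P i != 0]) [set` rootsR (P i)])%classic).
  apply: subset_card_le => x [i Pi0 Pix]; exists i => //=.
  by rewrite -(roots_on_rootsR Pi0) in_itv /=.
apply: bigcup_countable => [|i _]; first exact: countableP.
exact/finite_set_countable/finite_seq.
Qed.

Section SingularPencil.
Variables (R : realType) (n : nat).

Let intP (p : {poly int}) : {poly R} := map_poly (fun z : int => z%:~R) p.

Definition sing_num : {poly R} := intP (Fpoly n) - 1.
Definition sing_den : {poly R} := intP (Gpoly n) - 'X + 2%:P.

Lemma size_intP p : size (intP p) = size p.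
Proof. exact: size_map_inj_poly intr_inj _ _. Qed.

Lemma horner_sing_num k : sing_num.[k] = Fn n k - 1.
Proof. by rewrite !hornerE. Qed.

Lemma horner_sing_den k : sing_den.[k] = Gn n k - k + 2.
Proof. by rewrite !hornerE. Qed.

Lemma size_sing_num_lt_den : (1 <= n)%N -> (size sing_num < size sing_den)%N.
Proof.
move=> n1.
have -> : size sing_den = n.+2.
  rewrite /sing_den -addrA size_polyDl size_intP size_Gpoly //.
  rewrite (leq_ltn_trans (size_polyD _ _)) // size_polyN size_polyX size_polyC gtn_max.
  by apply/andP; split; [case: n n1 | rewrite ltnS (leq_trans (leq_b1 _))].
rewrite ltnS (leq_trans (size_polyD _ _)) // size_polyN size_intP size_poly1 geq_max.
by rewrite size_Fpoly.
Qed.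

Lemma not_Bset_neq0 (k : R) :
  ~ Bset n k -> Fn n k - 1 != 0 /\ Gn n k - k + 2 != 0.
Proof. by move=> kB; split; apply/eqP => eq0; apply: kB; [left | right]. Qed.

Lemma sing_ratioE (k : R) : ~ Bset n k ->
  - b2 n k / a2 n k = (Fn n k - 1) / (Gn n k - k + 2).
Proof.
move=> /not_Bset_neq0[u0 v0].
by rewrite /a2 /b2; field; rewrite u0 v0.
Qed.

End SingularPencil.

Theorem theorem3p15 (R : realType) (n : nat) :
  (1 <= n)%N -> countable (@S2 R n).
Proof.
move=> n1.
apply: sub_countable (countable_roots (fun q : rat => sing_num R n - ratr q *: sing_den R n)).
apply: subset_card_le => k [kB [[qa a_rat] [qb b_rat]]].
have [u0 v0] := not_Bset_neq0 kB.
pose t := - qb / qa.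
have tE : ratr t = (Fn n k - 1) / (Gn n k - k + 2) :> R.
  by rewrite -sing_ratioE // a_rat b_rat rmorphM rmorphN fmorphV.
exists t.
  by apply: subr_scale_neq0 (size_sing_num_lt_den _ n1) _; rewrite tE mulf_neq0 ?invr_eq0.
by rewrite /root hornerD hornerN hornerZ horner_sing_num horner_sing_den tE divfK ?subrr.
Qed.
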